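(* Let $n\geq 3$. There exist $a>1$, $p,q\in\mathbb{R}$, $\hat\theta\in\mathbb{R}$, angles $\theta_{\min}\le\theta_0<\theta_{\max}$, and a curve $\gamma_\infty(\theta)=(r_\infty(\theta)\cos\theta,r_\infty(\theta)\sin\theta)$, $\theta\in[\theta_{\min},\theta_{\max}]$, lying on a level curve of $\mathrm{Im}(e^{-i\hat\theta}z^n)$ (hence a stationary solution, i.e. $\frac{2r_\infty'^2-r_\infty r_\infty''+r_\infty^2}{r_\infty'^2+r_\infty^2}+(n-1)=0$), such that $\gamma_\infty(\theta_0)=(1,q)$ with $\gamma_\infty'(\theta_0)$ vertical (so the class $[\alpha]=p[H]-q[E]$ is semi-stable with respect to $[\omega]=a[H]-[E]$ on the blowup of $\mathbb{P}^n$ at a point, destabilized by the exceptional divisor $E$), $\gamma_\infty(\theta_{\max})=(a,p)$, $1\le r_\infty\cos\theta\le a$ with $r_\infty(\theta_{\min})\cos\theta_{\min}=r_\infty(\theta_{\max})\cos\theta_{\max}=a$, and $$r_\infty'\geq 0,\qquad \frac{r_\infty'}{r_\infty}\le 2\tan\theta\qquad\text{on }[\theta_{\min},\theta_{\max}].$$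
   Context: Here $z=x+iy$ is the complex coordinate on $\mathbb{R}^2$. On the blowup $X$ of $\mathbb{P}^n$ at a point, $H$ denotes the pullback of a hyperplane and $E$ the exceptional divisor; $[\omega]=a[H]-[E]$ with $a>1$ is a K\''ahler class. Semi-stability refers to the condition $\pi>\arg Z(V)>\arg Z(X)$ with $Z(V)=-\int_V e^{-i\omega+\alpha}$ (only the degree-$\dim V$ term integrated) holding only non-strictly, with $E$ the subvariety where strictness fails; for Calabi-symmetric data this corresponds to the level curve of $\mathrm{Im}(e^{-i\hat\theta}z^n)$ through $(1,q)$ having vertical tangent there. *)

From Stdlib Require Import Reals.
From Coquelicot Require Import Coquelicot.
Open Scope R_scope.

Definition cexp_i (t : R) : C := (cos t, sin t).

Definition polar_pt (r : R -> R) (t : R) : C := (r t * cos t, r t * sin t).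

Definition level_fun (n : nat) (thhat : R) (z : C) : R :=
  Im (Cmult (cexp_i (- thhat)) (Cpow z n)).

Definition stationary_ode (n : nat) (r : R -> R) (t : R) : Prop :=
  (2 * (Derive r t)^2 - r t * Derive (Derive r) t + (r t)^2)
    / ((Derive r t)^2 + (r t)^2) + (INR n - 1) = 0.

From Stdlib Require Import Reals Lra Lia.
From Coquelicot Require Import Coquelicot.
Open Scope R_scope.

(* Take r = c cos(phase t)^(-1/n) with phase t = theta0 + n (t - theta0). Then
   r^n cos(phase t) is constant, which says that the polar curve of r lies on a
   level set of Im(e^{-i thhat} z^n), and r'/r = tan (phase t). The abscissa
   x = r cos t has derivative x (tan (phase t) - tan t), which vanishes exactly at
   the fixed point theta0 of phase: x decreases to its minimum 1 at theta0, where
   the tangent is vertical, and increases afterwards. Since r'/r <= tan t before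
   theta0 and r'/r = tan theta0 < 2 tan theta0 at theta0, a short arc past theta0
   ends at some thmax with x(thmax) = a > 1, and the intermediate value theorem
   gives thmin before theta0 with x(thmin) = a. *)

Lemma Cpow_polar (rho t : R) (k : nat) :
  Cpow (rho * cos t, rho * sin t) k = (rho ^ k * cos (INR k * t), rho ^ k * sin (INR k * t)).
Proof.
  induction k as [|k IH].
  - simpl. rewrite Rmult_0_l, cos_0, sin_0. unfold RtoC. f_equal; ring.
  - simpl Cpow. rewrite IH, S_INR. unfold Cmult; simpl.
    rewrite Rmult_plus_distr_r, Rmult_1_l, cos_plus, sin_plus.
    f_equal; ring.
Qed.

Lemma level_fun_polar_pt (n : nat) (thhat : R) (r : R -> R) (t : R) :
  level_fun n thhat (polar_pt r t) = r t ^ n * sin (INR n * t - thhat).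
Proof.
  unfold level_fun, polar_pt, cexp_i. rewrite Cpow_polar. simpl.
  unfold Rminus. rewrite sin_plus, cos_neg, sin_neg. ring.
Qed.

Lemma stationary_ode_of_log_derivative (n : nat) (r : R -> R) (t T : R) :
  0 < r t -> Derive r t = r t * T ->
  Derive (Derive r) t = r t * (T ^ 2 + INR n * (1 + T ^ 2)) ->
  stationary_ode n r t.
Proof.
  intros Hr H1 H2. unfold stationary_ode. rewrite H1, H2.
  assert (0 < r t ^ 2 * (1 + T ^ 2)).
  { apply Rmult_lt_0_compat; [apply pow_lt; exact Hr|]. pose proof (pow2_ge_0 T). lra. }
  field. nra.
Qed.

Lemma strict_incr_of_derive (f df : R -> R) (a b : R) :
  (forall x, a <= x <= b -> is_derive f x (df x)) ->
  (forall x, a < x < b -> 0 < df x) ->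
  forall x y, a <= x -> x < y -> y <= b -> f x < f y.
Proof.
  intros Hd Hpos x y Hax Hxy Hyb.
  destruct (MVT_cor2 f df x y Hxy) as [c [Hc Hcxy]].
  { intros c Hc. apply is_derive_Reals, Hd. lra. }
  assert (0 < df c) by (apply Hpos; lra). nra.
Qed.

Lemma strict_decr_of_derive (f df : R -> R) (a b : R) :
  (forall x, a <= x <= b -> is_derive f x (df x)) ->
  (forall x, a < x < b -> df x < 0) ->
  forall x y, a <= x -> x < y -> y <= b -> f y < f x.
Proof.
  intros Hd Hneg x y Hax Hxy Hyb.
  apply Ropp_lt_cancel.
  apply (strict_incr_of_derive (fun x => - f x) (fun x => - df x) a b); auto.
  - intros z Hz. apply (is_derive_opp f z (df z)), Hd, Hz.
  - intros z Hz. specialize (Hneg z Hz). lra.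
Qed.

Lemma continuity_pt_of_derive (f : R -> R) (x l : R) : is_derive f x l -> continuity_pt f x.
Proof.
  intros Hd. apply continuity_pt_filterlim, (ex_derive_continuous (K := R_AbsRing) f).
  now exists l.
Qed.

Lemma locally_lt_of_continuity (f g : R -> R) (x : R) :
  continuity_pt f x -> continuity_pt g x -> f x < g x -> locally x (fun u => f u < g u).
Proof.
  intros Hf Hg Hlt. assert (Hpos : 0 < g x - f x) by lra.
  pose proof (continuity_pt_minus g f x Hg Hf) as Hc.
  apply continuity_pt_locally with (eps := mkposreal _ Hpos) in Hc.
  revert Hc; apply filter_imp. intros u Hu. simpl in Hu. unfold minus_fct in Hu.
  apply Rabs_lt_between' in Hu. lra.
Qed.

Lemma locally_right_segment (P : R -> Prop) (x : R) :
  locally x P -> exists d, 0 < d /\ forall y, x <= y <= x + d -> P y.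
Proof.
  intros [eps Heps]. exists (eps / 2). split; [pose proof (cond_pos eps); lra|].
  intros y Hy. apply Heps. change (Rabs (y - x) < eps).
  pose proof (cond_pos eps). rewrite Rabs_right; lra.
Qed.

Definition theta0 : R := 1 / 2.

Lemma cos_theta0_pos : 0 < cos theta0.
Proof. apply cos_gt_0; unfold theta0; pose proof PI2_1; lra. Qed.

Section Profile.

Variable n : nat.
Hypothesis n_gt1 : (1 < n)%nat.

Let INR_n_ge2 : 2 <= INR n.
Proof. apply (le_INR 2); lia. Qed.

Definition phase (t : R) : R := theta0 + INR n * (t - theta0).

Definition rho (t : R) : R :=
  exp (- ln (cos (phase t) / cos theta0) / INR n) / cos theta0.

Definition xcoord (t : R) : R := rho t * cos t.

(* phase maps [thL, thR] onto [0, 1], so both t and phase t stay in (0, PI/2). *)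
Definition thL : R := theta0 - theta0 / INR n.
Definition thR : R := theta0 + (1 - theta0) / INR n.

Lemma phase_theta0 : phase theta0 = theta0.
Proof. unfold phase; ring. Qed.

Lemma thL_lt_theta0 : thL < theta0.
Proof.
  unfold thL.
  assert (0 < theta0 / INR n) by (unfold theta0; apply Rdiv_lt_0_compat; lra). lra.
Qed.

Lemma theta0_lt_thR : theta0 < thR.
Proof.
  unfold thR.
  assert (0 < (1 - theta0) / INR n) by (unfold theta0; apply Rdiv_lt_0_compat; lra). lra.
Qed.

Lemma window_bounds (t : R) : thL <= t <= thR ->
  0 <= phase t <= 1 /\ 1 / 4 <= t <= 3 / 4.
Proof.
  unfold thL, thR, phase, theta0. intros Ht.
  assert (Hd : 1 / 2 / INR n <= 1 / 4).
  { apply Rmult_le_reg_l with (INR n); [lra|].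
    replace (INR n * (1 / 2 / INR n)) with (1 / 2) by (field; lra). lra. }
  replace ((1 - 1 / 2) / INR n) with (1 / 2 / INR n) in Ht by (field; lra).
  assert (Hk : INR n * (1 / 2 / INR n) = 1 / 2) by (field; lra).
  assert (0 <= INR n * (t - (1 / 2 - 1 / 2 / INR n))) by (apply Rmult_le_pos; lra).
  assert (0 <= INR n * (1 / 2 + 1 / 2 / INR n - t)) by (apply Rmult_le_pos; lra).
  split; nra.
Qed.

Lemma window_cos_pos (t : R) : thL <= t <= thR -> 0 < cos (phase t) /\ 0 < cos t.
Proof.
  intros Ht. destruct (window_bounds t Ht). pose proof PI2_1.
  split; apply cos_gt_0; lra.
Qed.

Lemma rho_pos (t : R) : 0 < rho t.
Proof. apply Rdiv_lt_0_compat; [apply exp_pos | apply cos_theta0_pos]. Qed.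

Lemma rho_theta0 : rho theta0 = / cos theta0.
Proof.
  pose proof cos_theta0_pos. unfold rho. rewrite phase_theta0, Rdiv_diag by lra.
  rewrite ln_1. replace (- 0 / INR n) with 0 by (field; lra). rewrite exp_0. field. lra.
Qed.

Lemma is_derive_rho (t : R) : 0 < cos (phase t) ->
  is_derive rho t (rho t * tan (phase t)).
Proof.
  pose proof cos_theta0_pos. intros Hc. unfold rho, phase in *. auto_derive;
    change (t + - theta0) with (t - theta0); fold (phase t) in *.
  - apply Rdiv_lt_0_compat; lra.
  - unfold tan, Rdiv. field. split; lra.
Qed.

Lemma Derive_rho (t : R) : 0 < cos (phase t) -> Derive rho t = rho t * tan (phase t).
Proof. intros Hc. apply is_derive_unique, is_derive_rho, Hc. Qed.

Lemma is_derive_tan_phase (t : R) : 0 < cos (phase t) ->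
  is_derive (fun s => tan (phase s)) t (INR n * (tan (phase t) ^ 2 + 1)).
Proof.
  intros Hc.
  apply (is_derive_comp tan phase t (tan (phase t) ^ 2 + 1) (INR n));
    [apply is_derive_tan; lra|].
  unfold phase. auto_derive; [easy | ring].
Qed.

Lemma is_derive_Derive_rho (t : R) : 0 < cos (phase t) ->
  is_derive (Derive rho) t (rho t * (tan (phase t) ^ 2 + INR n * (1 + tan (phase t) ^ 2))).
Proof.
  intros Hc.
  apply is_derive_ext_loc with (f := fun s => rho s * tan (phase s)).
  - assert (Hd : is_derive (fun s => cos (phase s)) t (- sin (phase t) * INR n)).
    { unfold phase, Rminus. auto_derive; [easy | ring]. }
    apply (filter_imp (fun s => 0 < cos (phase s))).
    + intros s Hs. now rewrite Derive_rho.
    + apply (locally_lt_of_continuity (fun _ => 0)); [| | exact Hc].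
      * apply continuity_pt_const. now intros u v.
      * exact (continuity_pt_of_derive _ _ _ Hd).
  - replace (rho t * (tan (phase t) ^ 2 + INR n * (1 + tan (phase t) ^ 2)))
      with (rho t * tan (phase t) * tan (phase t) + rho t * (INR n * (tan (phase t) ^ 2 + 1)))
      by ring.
    apply (is_derive_mult rho (fun s => tan (phase s)));
      [apply is_derive_rho, Hc | apply is_derive_tan_phase, Hc | intros; apply Rmult_comm].
Qed.

Lemma rho_pow_cos_phase (t : R) : 0 < cos (phase t) ->
  rho t ^ n * cos (phase t) = cos theta0 / cos theta0 ^ n.
Proof.
  intros Hc. pose proof cos_theta0_pos as H0.
  set (q := cos (phase t) / cos theta0).
  assert (Hq : 0 < q) by (apply Rdiv_lt_0_compat; lra).
  change (rho t) with (exp (- ln q / INR n) * / cos theta0).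
  rewrite Rpow_mult_distr, pow_inv, <- Rpower_pow by apply exp_pos.
  unfold Rpower. rewrite ln_exp.
  replace (INR n * (- ln q / INR n)) with (- ln q) by (field; lra).
  rewrite exp_Ropp, exp_ln by exact Hq. unfold q.
  field. split; [apply pow_nonzero|]; lra.
Qed.

(* Chosen so that n t - level_angle = PI/2 + phase t. *)
Definition level_angle : R := (INR n - 1) * theta0 - PI / 2.

Lemma level_fun_rho (t : R) : 0 < cos (phase t) ->
  level_fun n level_angle (polar_pt rho t) = cos theta0 / cos theta0 ^ n.
Proof.
  intros Hc. rewrite level_fun_polar_pt.
  replace (INR n * t - level_angle) with (PI / 2 + phase t)
    by (unfold level_angle, phase; ring).
  rewrite <- cos_sin. apply rho_pow_cos_phase, Hc.
Qed.

Lemma stationary_ode_rho (t : R) : 0 < cos (phase t) -> stationary_ode n rho t.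
Proof.
  intros Hc. apply (stationary_ode_of_log_derivative n rho t (tan (phase t))).
  - apply rho_pos.
  - apply Derive_rho, Hc.
  - apply is_derive_unique, is_derive_Derive_rho, Hc.
Qed.

Lemma xcoord_theta0 : xcoord theta0 = 1.
Proof. pose proof cos_theta0_pos. unfold xcoord. rewrite rho_theta0. field. lra. Qed.

Lemma is_derive_xcoord (t : R) : thL <= t <= thR ->
  is_derive xcoord t (xcoord t * (tan (phase t) - tan t)).
Proof.
  intros Ht. destruct (window_cos_pos t Ht) as [Hcp Hc].
  replace (xcoord t * (tan (phase t) - tan t))
    with (rho t * tan (phase t) * cos t + rho t * (- sin t))
    by (unfold xcoord, tan; field; lra).
  apply (is_derive_mult rho cos); [apply is_derive_rho, Hcp | | intros; apply Rmult_comm].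
  auto_derive; [easy | ring].
Qed.

Lemma tan_phase_lt_tan (t : R) : thL <= t <= thR -> t < theta0 -> tan (phase t) < tan t.
Proof.
  intros Ht Hlt. destruct (window_bounds t Ht).
  assert (t - phase t = (INR n - 1) * (theta0 - t)) by (unfold phase; ring).
  assert (0 < (INR n - 1) * (theta0 - t)) by (apply Rmult_lt_0_compat; lra).
  pose proof PI2_1. apply tan_increasing; lra.
Qed.

Lemma tan_lt_tan_phase (t : R) : thL <= t <= thR -> theta0 < t -> tan t < tan (phase t).
Proof.
  intros Ht Hgt. destruct (window_bounds t Ht).
  assert (phase t - t = (INR n - 1) * (t - theta0)) by (unfold phase; ring).
  assert (0 < (INR n - 1) * (t - theta0)) by (apply Rmult_lt_0_compat; lra).
  pose proof PI2_1. apply tan_increasing; lra.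
Qed.

Lemma xcoord_pos (t : R) : thL <= t <= thR -> 0 < xcoord t.
Proof. intros Ht. apply Rmult_lt_0_compat; [apply rho_pos | apply window_cos_pos, Ht]. Qed.

Lemma xcoord_decreasing (u v : R) : thL <= u -> u < v -> v <= theta0 -> xcoord v < xcoord u.
Proof.
  pose proof theta0_lt_thR.
  apply (strict_decr_of_derive xcoord (fun t => xcoord t * (tan (phase t) - tan t))
           thL theta0).
  - intros t Ht. apply is_derive_xcoord. lra.
  - intros t Ht. assert (Hw : thL <= t <= thR) by lra.
    pose proof (xcoord_pos t Hw). pose proof (tan_phase_lt_tan t Hw (proj2 Ht)).
    apply Rmult_pos_neg; lra.
Qed.

Lemma xcoord_increasing (u v : R) : theta0 <= u -> u < v -> v <= thR -> xcoord u < xcoord v.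
Proof.
  pose proof thL_lt_theta0.
  apply (strict_incr_of_derive xcoord (fun t => xcoord t * (tan (phase t) - tan t))
           theta0 thR).
  - intros t Ht. apply is_derive_xcoord. lra.
  - intros t Ht. assert (Hw : thL <= t <= thR) by lra.
    pose proof (xcoord_pos t Hw). pose proof (tan_lt_tan_phase t Hw (proj1 Ht)).
    apply Rmult_lt_0_compat; lra.
Qed.

Lemma xcoord_ge_1 (t : R) : thL <= t <= thR -> 1 <= xcoord t.
Proof.
  intros Ht. rewrite <- xcoord_theta0.
  destruct (Rtotal_order t theta0) as [Hlt | [-> | Hgt]].
  - left. apply xcoord_decreasing; lra.
  - lra.
  - left. apply xcoord_increasing; lra.
Qed.

Lemma right_endpoint_exists : exists thmax,
  theta0 < thmax <= thR /\ xcoord thmax < xcoord thL /\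
  forall t, theta0 <= t <= thmax -> tan (phase t) <= 2 * tan t.
Proof.
  pose proof cos_theta0_pos. pose proof thL_lt_theta0. pose proof theta0_lt_thR as HR0.
  assert (Hconst : forall c, continuity_pt (fun _ => c) theta0)
    by (intros c; apply continuity_pt_const; now intros u v).
  assert (Hx : locally theta0 (fun t => xcoord t < xcoord thL)).
  { apply locally_lt_of_continuity; [| apply Hconst | apply xcoord_decreasing; lra].
    eapply continuity_pt_of_derive, is_derive_xcoord. lra. }
  assert (Htan : locally theta0 (fun t => tan (phase t) < 2 * tan t)).
  { assert (0 < tan theta0) by (apply tan_gt_0; unfold theta0; pose proof PI2_1; lra).
    apply locally_lt_of_continuity; [| | rewrite phase_theta0; lra].
    - eapply continuity_pt_of_derive, is_derive_tan_phase. now rewrite phase_theta0.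
    - eapply continuity_pt_of_derive, is_derive_scal, is_derive_tan. lra. }
  assert (HR : locally theta0 (fun t => t < thR)).
  { apply locally_lt_of_continuity; [apply continuity_pt_id | apply Hconst | exact HR0]. }
  destruct (locally_right_segment _ _ (filter_and _ _ Hx (filter_and _ _ Htan HR)))
    as [d [Hd Hseg]].
  exists (theta0 + d). destruct (Hseg (theta0 + d)) as [Hxd [_ HRd]]; [lra|].
  split; [lra|]. split; [exact Hxd|].
  intros t Ht. destruct (Hseg t Ht) as [_ [Ht2 _]]. lra.
Qed.

Lemma left_endpoint_exists (a : R) : 1 < a < xcoord thL ->
  exists thmin, thL <= thmin <= theta0 /\ xcoord thmin = a.
Proof.
  intros Ha. pose proof thL_lt_theta0 as HL0. pose proof theta0_lt_thR.
  destruct (Ranalysis5.IVT_interv (fun s => a - xcoord s) thL theta0) as [thmin [Hin Heq]].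
  - intros s Hs. apply (continuity_pt_minus (fct_cte a) xcoord).
    + apply continuity_pt_const. now intros u v.
    + eapply continuity_pt_of_derive, is_derive_xcoord. lra.
  - exact HL0.
  - lra.
  - rewrite xcoord_theta0. lra.
  - exists thmin. split; [exact Hin | lra].
Qed.

Lemma rho_regular (t : R) : thL <= t <= thR ->
  0 < rho t /\ ex_derive rho t /\ ex_derive (Derive rho) t.
Proof.
  intros Ht. destruct (window_cos_pos t Ht) as [Hc _].
  split; [apply rho_pos|].
  split; eexists; [apply is_derive_rho | apply is_derive_Derive_rho]; exact Hc.
Qed.

Lemma Derive_rho_nonneg (t : R) : thL <= t <= thR -> 0 <= Derive rho t.
Proof.
  intros Ht. destruct (window_cos_pos t Ht) as [Hc _].
  destruct (window_bounds t Ht) as [[H0 H1] _].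
  rewrite Derive_rho by exact Hc. apply Rmult_le_pos; [left; apply rho_pos|].
  destruct H0 as [Hpos | <-]; [|rewrite tan_0; lra].
  left. apply tan_gt_0; [exact Hpos | pose proof PI2_1; lra].
Qed.

Lemma rho_vertical_tangent :
  Derive rho theta0 * cos theta0 - rho theta0 * sin theta0 = 0 /\
  Derive rho theta0 * sin theta0 + rho theta0 * cos theta0 <> 0.
Proof.
  pose proof cos_theta0_pos as Hc.
  assert (Hs : 0 < sin theta0) by (apply sin_gt_0; unfold theta0; pose proof PI2_1; lra).
  rewrite Derive_rho, phase_theta0, rho_theta0 by (rewrite phase_theta0; exact Hc).
  unfold tan. split; [field; lra|].
  replace (/ cos theta0 * (sin theta0 / cos theta0) * sin theta0 + / cos theta0 * cos theta0)
    with ((sin theta0 / cos theta0) ^ 2 + 1) by (field; lra).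
  pose proof (pow2_ge_0 (sin theta0 / cos theta0)). lra.
Qed.

Lemma tan_phase_le_tan (t : R) : thL <= t <= theta0 -> tan (phase t) <= tan t.
Proof.
  intros Ht. pose proof theta0_lt_thR.
  destruct (Rle_lt_or_eq_dec _ _ (proj2 Ht)) as [Hlt | ->].
  - left. apply tan_phase_lt_tan; lra.
  - rewrite phase_theta0. lra.
Qed.

Lemma log_derivative_rho (t : R) : thL <= t <= thR -> Derive rho t / rho t = tan (phase t).
Proof.
  intros Ht. pose proof (rho_pos t). destruct (window_cos_pos t Ht) as [Hc _].
  rewrite Derive_rho by exact Hc. field. lra.
Qed.

Lemma stationary_arc : exists thmin thmax,
  thL <= thmin <= theta0 /\ theta0 < thmax <= thR /\
  1 < xcoord thmax /\ xcoord thmin = xcoord thmax /\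
  forall t, thmin <= t <= thmax ->
    1 <= xcoord t <= xcoord thmax /\ Derive rho t / rho t <= 2 * tan t.
Proof.
  destruct right_endpoint_exists as [thmax [Hmax [Hlt Htan]]].
  assert (Ha : 1 < xcoord thmax)
    by (rewrite <- xcoord_theta0; apply xcoord_increasing; lra).
  destruct (left_endpoint_exists (xcoord thmax)) as [thmin [Hmin Heq]]; [lra|].
  exists thmin, thmax. do 4 (split; [easy|]).
  intros t Ht. assert (Hw : thL <= t <= thR) by lra.
  split; [split; [apply xcoord_ge_1, Hw|] | rewrite log_derivative_rho by exact Hw].
  - destruct (Rle_or_lt t theta0) as [Hle | Hgt].
    + rewrite <- Heq. destruct (Rle_lt_or_eq_dec _ _ (proj1 Ht)) as [Hlt' | ->]; [|lra].
      left. apply xcoord_decreasing; lra.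
    + destruct (Rle_lt_or_eq_dec _ _ (proj2 Ht)) as [Hlt' | ->]; [|lra].
      left. apply xcoord_increasing; lra.
  - destruct (Rle_or_lt t theta0) as [Hle | Hgt]; [|apply Htan; lra].
    assert (0 < tan t)
      by (destruct (window_bounds t Hw); apply tan_gt_0; pose proof PI2_1; lra).
    pose proof (tan_phase_le_tan t (conj (proj1 Hw) Hle)). lra.
Qed.

End Profile.

Theorem lemma5p2 (n : nat) (hn : (3 <= n)%nat) :
  exists (a p q thhat thmin th0 thmax : R) (r : R -> R),
    1 < a /\ thmin <= th0 /\ th0 < thmax /\
    (* r is positive and twice differentiable on [thmin, thmax] *)
    (forall t, thmin <= t <= thmax ->
       0 < r t /\ ex_derive r t /\ ex_derive (Derive r) t) /\
    (* the curve lies on a level curve of Im(e^{-i thhat} z^n) *)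
    (exists c : R, forall t, thmin <= t <= thmax ->
       level_fun n thhat (polar_pt r t) = c) /\
    (* hence it is a stationary solution *)
    (forall t, thmin <= t <= thmax -> stationary_ode n r t) /\
    (* gamma(th0) = (1, q) with vertical tangent there *)
    r th0 * cos th0 = 1 /\ r th0 * sin th0 = q /\
    Derive r th0 * cos th0 - r th0 * sin th0 = 0 /\
    Derive r th0 * sin th0 + r th0 * cos th0 <> 0 /\
    (* gamma(thmax) = (a, p) *)
    r thmax * cos thmax = a /\ r thmax * sin thmax = p /\
    r thmin * cos thmin = a /\
    (forall t, thmin <= t <= thmax ->
       1 <= r t * cos t <= a /\
       0 <= Derive r t /\
       Derive r t / r t <= 2 * tan t).
Proof.
  assert (Hn : (1 < n)%nat) by lia.
  destruct (stationary_arc n Hn) as [thmin [thmax [Hmin [Hmax [Ha [Heq Harc]]]]]].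
  assert (Hw : forall t, thmin <= t <= thmax -> thL n <= t <= thR n) by (intros; lra).
  assert (Hcos : forall t, thmin <= t <= thmax -> 0 < cos (phase n t))
    by (intros t Ht; apply (window_cos_pos n Hn t (Hw t Ht))).
  destruct (rho_vertical_tangent n Hn) as [Hvert Hnz].
  exists (xcoord n thmax), (rho n thmax * sin thmax), (rho n theta0 * sin theta0),
    (level_angle n), thmin, theta0, thmax, (rho n).
  do 3 (split; [lra|]).
  split; [intros t Ht; apply (rho_regular n Hn), Hw, Ht|].
  split; [exists (cos theta0 / cos theta0 ^ n); intros t Ht; apply (level_fun_rho n Hn), Hcos, Ht|].
  split; [intros t Ht; apply (stationary_ode_rho n Hn), Hcos, Ht|].
  split; [apply xcoord_theta0, Hn|].
  do 5 (split; [easy|]). split; [exact Heq|].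
  intros t Ht. destruct (Harc t Ht) as [Hx Hlog].
  split; [exact Hx|]. split; [apply (Derive_rho_nonneg n Hn), Hw, Ht | exact Hlog].
Qed.
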